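(* Let $v\in V^X$ with $I(v)=J_\ell$ for some $\ell\in\{1,\dots,N-1\}$, let $k\in\mathbb{N}$ and $i\in\Pi$, and suppose there exists $c\in\mathbb{N}$ such that $\sup\{\mathrm{Cost}_i(\rho)\mid\rho\in\Lambda^k(v)\}=c$. Then $c\le\mathcal{O}\big(|V|^{(|V|+3)(|\Pi|+2)}\big)$.
   Context: Let $\mathcal{G}$ be a quantitative reachability game on an arena $G=(\Pi,V,(V_i)_{i\in\Pi},E)$ (finite player set $\Pi$, finite vertex set $V$ with $|V|\ge2$, $|\Pi|\le|V|$, partition $(V_i)$, every vertex has a successor) with targets $F_i\subseteq V$ and costs $\mathrm{Cost}_i(\rho)=$ least $k$ with $\rho_k\in F_i$ (or $+\infty$); $v_0\in V$. Extended game: arena $X$ with vertices $V^X=V\times2^\Pi$, edges $((v,I),(v',I'))\in E^X$ iff $(v,v')\in E$ and $I'=I\cup\{i:v'\in F_i\}$, $(v,I)\in V^X_i$ iff $v\in V_i$, targets $F^X_i=\{(v,I):i\in I\}$ with corresponding reachability costs $\mathrm{Cost}_i$; $x_0=(v_0,\{i:v_0\in F_i\})$; $I(u)$ is the second component. $\mathcal{I}$ is the set of $I$ with some $(v,I)$ reachable from $x_0$, $N=|\mathcal{I}|$, $J_1<\dots<J_N$ a fixed total order of $\mathcal{I}$ extending $I<I'$ iff $I\ne I'$ and some $(v',I')$ is reachable from some $(v,I)$. $V^{\ge J_n}=\{(v,J_m):v\in V,m\ge n\}$. Labelings: for $\lambda:V^X\to\mathbb{N}\cup\{+\infty\}$,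 a play $\rho$ of $X$ is $\lambda$-consistent if $\mathrm{Cost}_i(\rho_{\ge n})\le\lambda(\rho_n)$ whenever $\rho_n\in V^X_i$. $\lambda^0(u)=0$ if $u\in V^X_i$ and $i\in I(u)$, else $+\infty$. The update of $\lambda^k$ w.r.t. $V^{\ge J_n}$ keeps values outside $V^{\ge J_n}$ and for $u\in V^{\ge J_n}\cap V^X_i$ sets $\lambda^{k+1}(u)=0$ if $i\in I(u)$, otherwise $1+\min_{(u,u')\in E^X}\sup\{\mathrm{Cost}_i(\rho):\rho\in\Lambda^k(u')\}$ ($1+(+\infty)=+\infty$). The sequence is generated by $n_0=N$, $\lambda^{k+1}=$ update of $\lambda^k$ w.r.t. $V^{\ge J_{n_k}}$, $n_{k+1}=n_k-1$ if $\lambda^{k+1}=\lambda^k$ and $n_k>1$, else $n_{k+1}=n_k$. $\Lambda^k(v)$ is the set of $\lambda^k$-consistent plays from $v$. The $\mathcal{O}$ is with respect to the game parameters $|V|,|\Pi|$. *)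

From Stdlib Require Import ClassicalEpsilon.
From mathcomp Require Import all_boot.


(* A quantitative reachability game: players Pl, vertices Vt, the partition
   (V_i) given by the owner map, edges, targets F_i, initial vertex v_0. *)
Record game := Game {
  Pl : finType;
  Vt : finType;
  owner : Vt -> Pl;
  edge : rel Vt;
  target : Pl -> {set Vt};
  init : Vt }.

Set Implicit Arguments.
Unset Strict Implicit.
Unset Printing Implicit Defensive.

Definition xvert (G : game) : finType := (Vt G * {set Pl G})%type.

Definition xedge (G : game) : rel (xvert G) :=
  fun u u' => edge G u.1 u'.1 && (u'.2 == u.2 :|: [set i | u'.1 \in target G i]).

Definition xowner (G : game) (u : xvert G) : Pl G := owner G u.1.

Definition xinit (G : game) : xvert G := (init G, [set i | init G \in target G i]).

Definition play (G : game) (rho : nat -> xvert G) : Prop :=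
  forall n, @xedge G (rho n) (rho n.+1).

Definition suffix (G : game) (rho : nat -> xvert G) (n : nat) : nat -> xvert G :=
  fun m => rho (n + m).

(* ---------- N u {+oo}, encoded as option nat with None = +oo ---------- *)
Definition ele (x y : option nat) : Prop :=
  match x, y with
  | _, None => True
  | None, Some _ => False
  | Some a, Some b => a <= b
  end.

Definition is_esup (S : option nat -> Prop) (s : option nat) : Prop :=
  (forall x, S x -> ele x s) /\ (forall t, (forall x, S x -> ele x t) -> ele s t).

Definition esup (S : option nat -> Prop) : option nat :=
  epsilon (inhabits None) (is_esup S).

Definition emin (x y : option nat) : option nat :=
  match x, y with
  | None, _ => y
  | _, None => x
  | Some a, Some b => Some (minn a b)
  end.

Definition esucc (x : option nat) : option nat := omap S x.

Definition is_first (p : pred nat) (o : option nat) : Prop :=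
  match o with
  | Some k => p k /\ (forall j, p j -> k <= j)
  | None => forall j, ~~ p j
  end.

Definition first_hit (p : pred nat) : option nat :=
  epsilon (inhabits None) (is_first p).

(* Cost_i(rho) = least k with rho_k in F^X_i = {(v,I) | i \in I} *)
Definition cost (G : game) (i : Pl G) (rho : nat -> xvert G) : option nat :=
  first_hit (fun k => i \in (rho k).2).

Definition labeling (G : game) := xvert G -> option nat.

Definition consistent (G : game) (lam : labeling G) (rho : nat -> xvert G) : Prop :=
  forall n, ele (cost (xowner (rho n)) (suffix rho n)) (lam (rho n)).

Definition Lambda (G : game) (lam : labeling G) (u : xvert G) (rho : nat -> xvert G) : Prop :=
  [/\ play rho, rho 0 = u & consistent lam rho].

Definition sup_cost (G : game) (lam : labeling G) (i : Pl G) (u : xvert G) : option nat :=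
  esup (fun x => exists rho, Lambda lam u rho /\ x = cost i rho).

Definition lambda0 (G : game) : labeling G :=
  fun u => if xowner u \in u.2 then Some 0 else None.

(* J is the list [J_1; ...; J_N] *)
Definition reachI (G : game) (I : {set Pl G}) : Prop :=
  exists v : Vt G, connect (@xedge G) (@xinit G) ((v, I) : xvert G).

Definition valid_order (G : game) (J : seq {set Pl G}) : Prop :=
  [/\ uniq J,
      (forall I, I \in J <-> reachI I) &
      (forall u u' : xvert G, connect (@xedge G) u u' -> u.2 != u'.2 ->
         u.2 \in J -> u'.2 \in J -> index u.2 J < index u'.2 J)].

(* J_n, 1-indexed *)
Definition Jn (G : game) (J : seq {set Pl G}) (n : nat) : {set Pl G} := nth set0 J n.-1.

Definition in_geq (G : game) (J : seq {set Pl G}) (n : nat) (u : xvert G) : bool :=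
  (u.2 \in J) && (n.-1 <= index u.2 J).

Definition update (G : game) (J : seq {set Pl G}) (lam : labeling G) (n : nat) : labeling G :=
  fun u =>
    if in_geq J n u then
      if xowner u \in u.2 then Some 0
      else esucc (\big[emin/None]_(u' | @xedge G u u') sup_cost lam (xowner u) u')
    else lam u.

Definition step (G : game) (J : seq {set Pl G}) (s : labeling G * nat) : labeling G * nat :=
  let: (lam, n) := s in
  let lam' := update J lam n in
  (lam', if [forall u, lam' u == lam u] && (1 < n) then n.-1 else n).

Definition lam_seq (G : game) (J : seq {set Pl G}) (k : nat) : labeling G * nat :=
  iter k (step J) (@lambda0 G, size J).

Definition lam_k (G : game) (J : seq {set Pl G}) (k : nat) : labeling G := (lam_seq J k).1.

From Pilot Require Import Defs.
From mathcomp Require Import all_boot zify.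
From Stdlib Require Import ClassicalEpsilon Classical FunctionalExtensionality.

Set Implicit Arguments.
Unset Strict Implicit.
Unset Printing Implicit Defensive.

(* If every finite label is at most L, a finite supremum of Cost_i over the
   consistent plays from a vertex is at most |Pi| L + |V| (|Pi| + 1).  Indeed,
   on a consistent play of larger cost call a position settled when every
   earlier position with a finite label has already seen its owner's target.
   Such an owner is served within L steps and the sets I only grow, so at
   most |Pi| L positions are unsettled; two settled positions before the cost
   is paid therefore carry the same vertex of X, and repeating the loop
   between them gives a consistent play of strictly larger cost.
   Along lambda^k labels only decrease, and a label that becomes finite is
   1 + such a supremum.  Ordering the sets I by size and, for equal I, by the
   number of finite labels, each new label is at most |V| times an earlier
   bound plus O(|V|^2); after at most |V| (|Pi| + 1) such steps this gives
   |V|^O(|V| |Pi|). *)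

Lemma ele_refl x : ele x x.
Proof. by case: x => /=. Qed.

Lemma ele_trans y x z : ele x y -> ele y z -> ele x z.
Proof. by case: x => [a|]; case: y => [b|]; case: z => [c|] //=; lia. Qed.

Lemma esup_spec S : is_esup S (esup S).
Proof.
rewrite /esup; apply: epsilon_spec.
have [[B0 ubB0]|unbounded] := classic (exists B, forall x, S x -> ele x (Some B)).
  pose boundb B := if excluded_middle_informative (forall x, S x -> ele x (Some B))
                   then true else false.
  have boundbP B : reflect (forall x, S x -> ele x (Some B)) (boundb B).
    by rewrite /boundb; case: excluded_middle_informative => h; constructor.
  have exB : exists B, boundb B by exists B0; apply/boundbP.
  case: (ex_minnP exB) => B /boundbP ubB minB.
  exists (Some B); split=> // -[T|] ubT //=.
  by apply/minB/boundbP.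
exists None; split=> [[]//|[T|] ubT] //.
by case: unbounded; exists T.
Qed.

Lemma esup_mono (S S' : option nat -> Prop) :
  (forall x, S x -> S' x) -> ele (esup S) (esup S').
Proof.
move=> sub; have [ub _] := esup_spec S'; have [_ least] := esup_spec S.
by apply: least => x /sub; apply: ub.
Qed.

(* [Some 0] must be excluded: it is also the supremum of the empty set. *)
Lemma esup_attained S s : is_esup S (Some s.+1) -> S (Some s.+1).
Proof.
case=> ub least; apply: NNPP => notS.
suff : ele (Some s.+1) (Some s) by rewrite /= ltnn.
apply: least => -[x|] Sx; have /= := ub _ Sx => //.
by rewrite leq_eqVlt ltnS => /orP[/eqP xs|//]; case: notS; rewrite -xs.
Qed.

Lemma emin_eq x y : emin x y = x \/ emin x y = y.
Proof.
case: x => [a|]; case: y => [b|] /=; auto.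
by case: (leqP a b) => ab; [left | right]; congr Some; lia.
Qed.

Lemma emin_mono x1 x2 y1 y2 : ele x1 x2 -> ele y1 y2 -> ele (emin x1 y1) (emin x2 y2).
Proof. by case: x1 => [a1|]; case: x2 => [a2|]; case: y1 => [b1|]; case: y2 => [b2|] //=; lia. Qed.

Lemma esucc_mono x y : ele x y -> ele (esucc x) (esucc y).
Proof. by case: x => [a|]; case: y => [b|]. Qed.

Lemma bigmin_mono (T : finType) (P : pred T) (F F' : T -> option nat) :
  (forall w, ele (F w) (F' w)) ->
  ele (\big[emin/None]_(w | P w) F w) (\big[emin/None]_(w | P w) F' w).
Proof. by move=> le; apply: (big_ind2 ele) => // *; apply: emin_mono. Qed.

Lemma bigmin_Some (T : finType) (P : pred T) (F : T -> option nat) a :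
  \big[emin/None]_(w | P w) F w = Some a -> exists2 w, P w & F w = Some a.
Proof.
elim/big_ind: _ => [//|x y IHx IHy|w Pw Fw]; last by exists w.
by case: (emin_eq x y) => ->.
Qed.

Lemma first_hit_spec p : is_first p (first_hit p).
Proof.
rewrite /first_hit; apply: epsilon_spec.
have [[k pk]|none] := classic (exists k, p k).
  by case: (ex_minnP (ex_intro _ k pk)) => m pm minm; exists (Some m).
by exists None => j; apply/negP => pj; apply: none; exists j.
Qed.

Lemma card_window N (A : {set 'I_N}) L :
  (forall x y, x \in A -> y \in A -> x < y + L) -> #|A| <= L.
Proof.
case: L => [|L] near.
  rewrite leqn0 cards_eq0; apply/eqP/setP => x; rewrite inE; apply/negP => xA.
  by have := near x x xA xA; rewrite addn0 ltnn.
pose residue (x : 'I_N) : 'I_L.+1 := Ordinal (ltn_pmod x (ltn0Sn L)).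
have inj : {in A &, injective residue}.
  move=> x y xA yA /(congr1 val) /= e; apply/val_inj => /=.
  wlog yx : x y xA yA e / y <= x => [hyp|].
    by case: (leqP y x) => [|/ltnW] le; [apply: hyp | apply/esym/hyp].
  move/eqP: e; rewrite eqn_mod_dvd // => div.
  have := near x y xA yA; case: (posnP (x - y)) => [|pos]; first lia.
  by have := dvdn_leq pos div; lia.
by rewrite -(card_in_imset inj); apply: leq_trans (max_card _) _; rewrite card_ord.
Qed.

Lemma card_bigcup_le (T I : finType) (F : I -> {set T}) :
  #|\bigcup_(i : I) F i| <= \sum_(i : I) #|F i|.
Proof.
elim/big_rec2: _ => [|i n U _ le]; first by rewrite cards0.
by apply: leq_trans (leq_card_setU _ _).1 _; rewrite leq_add2l.
Qed.

Section Plays.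
Variable G : game.
Implicit Types (rho : nat -> xvert G) (lam : labeling G) (i j : Pl G).

Lemma cost_Some i rho e :
  cost i rho = Some e <-> i \in (rho e).2 /\ (forall m, m < e -> i \notin (rho m).2).
Proof.
have := first_hit_spec (fun k => i \in (rho k).2); rewrite -/(cost i rho).
case: (cost i rho) => [k [hk mink]|none]; split => //.
- by case=> <-; split=> // m mk; apply/negP => /mink; rewrite leqNgt mk.
- case=> he mine; congr Some; apply/eqP; rewrite eqn_leq mink // leqNgt.
  by apply/negP => /mine; rewrite hk.
- by case=> he _; move: (none e); rewrite he.
Qed.

Lemma cost_le_hit i rho e0 :
  i \in (rho e0).2 -> exists2 e, cost i rho = Some e & e <= e0.
Proof.
have := first_hit_spec (fun k => i \in (rho k).2); rewrite -/(cost i rho).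
case: (cost i rho) => [k [_ mink]|none] he0; first by exists k => //; apply: mink.
by move: (none e0); rewrite he0.
Qed.

Lemma cost_eq_prefix i rho rho' e0 :
  i \in (rho e0).2 -> (forall m, m <= e0 -> rho m = rho' m) -> cost i rho = cost i rho'.
Proof.
move=> he0 agree; have [e ce le] := cost_le_hit he0.
rewrite ce; symmetry; case/cost_Some: ce => he mine; apply/cost_Some; split.
  by rewrite -agree.
move=> m me; rewrite -agree; first exact: mine.
exact: ltnW (leq_trans me le).
Qed.

Lemma play_subset rho n m : play rho -> n <= m -> (rho n).2 \subset (rho m).2.
Proof.
move=> pl /subnKC <-; elim: (m - n) => [|d IH]; first by rewrite addn0.
apply: subset_trans IH _; rewrite addnS.
by case/andP: (pl (n + d)) => _ /eqP ->; apply: subsetUl.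
Qed.

Lemma play_eq_card rho n m :
  play rho -> n <= m -> (rho n).1 = (rho m).1 -> #|(rho n).2| = #|(rho m).2| ->
  rho n = rho m.
Proof.
move=> pl nm e1 e2.
rewrite [rho n]surjective_pairing [rho m]surjective_pairing e1; congr pair.
by apply/eqP; rewrite eqEcard play_subset // e2 leqnn.
Qed.

Lemma consistent_owner_hit lam rho n b :
  play rho -> consistent lam rho -> lam (rho n) = Some b ->
  xowner (rho n) \in (rho (n + b)).2.
Proof.
move=> pl hcons lb; have := hcons n; rewrite lb.
case ce: (cost _ _) => [e|] //= eb; case/cost_Some: ce => he _.
by apply: subsetP (play_subset pl _) _ he; rewrite leq_add2l.
Qed.

Lemma Lambda_mono (lam lam' : labeling G) u rho :
  (forall x, ele (lam x) (lam' x)) -> Lambda lam u rho -> Lambda lam' u rho.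
Proof. by move=> le [pl r0 hcons]; split=> // n; apply: ele_trans (hcons n) _. Qed.

Lemma sup_cost_mono (lam lam' : labeling G) i u :
  (forall x, ele (lam x) (lam' x)) -> ele (sup_cost lam i u) (sup_cost lam' i u).
Proof.
move=> le; apply: esup_mono => x [rho [L ->]]; exists rho; split=> //.
exact: Lambda_mono L.
Qed.

Definition settled lam rho t :=
  [forall n : 'I_t, (lam (rho n) != None) ==> (xowner (rho n) \in (rho t).2)].

Lemma settledP lam rho t :
  reflect (forall n, n < t -> lam (rho n) != None -> xowner (rho n) \in (rho t).2)
          (settled lam rho t).
Proof.
apply: (iffP forallP) => [h n nt|h n]; last by apply/implyP; apply: h.
by have /implyP := h (Ordinal nt).
Qed.

Definition pump rho a b : nat -> xvert G :=
  fun t => if t < b then rho t else rho (t - (b - a)).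

Lemma pump_before rho a b t : t < b -> pump rho a b t = rho t.
Proof. by rewrite /pump => ->. Qed.

Lemma pump_after rho a b t : b <= t -> pump rho a b t = rho (t - (b - a)).
Proof. by rewrite /pump ltnNge => ->. Qed.

Lemma pump_play rho a b : play rho -> a < b -> rho a = rho b -> play (pump rho a b).
Proof.
move=> pl ab eab t; case: (ltngtP t.+1 b) => tb.
- by rewrite !pump_before ?(ltnW tb).
- have bt : b <= t by [].
  rewrite !pump_after ?(leqW bt) // subSn; first exact: pl.
  exact: leq_trans (leq_subr _ _) bt.
- rewrite pump_before -?tb // pump_after ?tb // subKn ?(ltnW ab) // eab -tb.
  exact: pl.
Qed.

Lemma pump_consistent lam rho a b :
  play rho -> consistent lam rho -> a < b -> rho a = rho b -> settled lam rho b ->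
  consistent lam (pump rho a b).
Proof.
move=> pl hcons ab eab /settledP sett n.
case: (ltnP n b) => nb; last first.
  have -> : Defs.suffix (pump rho a b) n = Defs.suffix rho (n - (b - a)).
    apply: functional_extensionality => m.
    by rewrite /Defs.suffix pump_after; [congr rho; lia | lia].
  by rewrite pump_after //; apply: hcons.
rewrite pump_before //; case lb: (lam (rho n)) => [bn|]; last by case: cost.
(* The owner's target is already reached at [a], before the loop is repeated. *)
have owner_a : xowner (rho n) \in (rho (n + (a - n))).2.
  apply: subsetP (@play_subset _ a _ pl _) _ _; first lia.
  by rewrite eab; apply: sett; rewrite ?lb.
rewrite -lb -(@cost_eq_prefix _ (Defs.suffix rho n) _ (a - n) owner_a); first exact: hcons.
by move=> m le; rewrite /Defs.suffix pump_before //; lia.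
Qed.

Lemma pump_cost j rho a b c :
  cost j rho = Some c -> b <= c -> cost j (pump rho a b) = Some (c + (b - a)).
Proof.
case/cost_Some=> hc minc bc; apply/cost_Some; split.
  by rewrite pump_after ?addnK // (leq_trans bc (leq_addr _ _)).
move=> m mc; case: (ltnP m b) => mb.
  by rewrite pump_before // minc // (leq_trans mb bc).
by rewrite pump_after // minc //; lia.
Qed.

Lemma card_entry_window rho (p : Pl G) N L : play rho ->
  #|[set t : 'I_N | (p \notin (rho t).2) && (p \in (rho (t + L)).2)]| <= L.
Proof.
move=> pl; apply: card_window => x y; rewrite !inE => /andP[px _] /andP[_ py].
rewrite ltnNge; apply: contra px => yx; exact: subsetP (play_subset pl yx) _ py.
Qed.

Lemma play_repeat rho N (A : {set 'I_N}) :
  play rho -> #|Vt G| * (#|Pl G|).+1 < #|A| ->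
  exists x y : 'I_N, [/\ x \in A, y \in A, x < y & rho x = rho y].
Proof.
move=> pl big.
pose key (t : 'I_N) := ((rho t).1, inord #|(rho t).2| : 'I_(#|Pl G|).+1).
have /dinjectivePn[x xA [y /andP[yx yA] kxy]] : ~~ dinjectiveb key A.
  apply: contraTN big => /dinjectiveP/leq_card_in.
  by rewrite card_prod !card_ord -leqNgt.
have same (t t' : 'I_N) : t <= t' -> key t = key t' -> rho t = rho t'.
  move=> tt' [e1 /(congr1 val)]; rewrite /= !inordK ?ltnS ?max_card //.
  exact: play_eq_card.
case: (ltngtP x y) => [xy|yx'|/val_inj exy]; last by rewrite exy eqxx in yx.
  by exists x, y; split=> //; apply: same (ltnW xy) kxy.
by exists y, x; split=> //; apply: same (ltnW yx') (esym kxy).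
Qed.

Section BoundedLabels.
Variables (lam : labeling G) (rho : nat -> xvert G) (L : nat).
Hypotheses (pl : play rho) (hcons : consistent lam rho).
Hypothesis label_le : forall n b, lam (rho n) = Some b -> b <= L.

Lemma unsettled_entry t : ~~ settled lam rho t ->
  exists p, (p \notin (rho t).2) && (p \in (rho (t + L)).2).
Proof.
rewrite negb_forall => /existsP[n]; rewrite negb_imply => /andP[ln own].
case lb: (lam (rho n)) ln => [b|] // _; exists (xowner (rho n)); rewrite own /=.
apply: subsetP (play_subset pl _) _ (consistent_owner_hit pl hcons lb).
by have := ltn_ord n; have := label_le lb; lia.
Qed.

Lemma card_unsettled N : #|[set t : 'I_N | ~~ settled lam rho t]| <= #|Pl G| * L.
Proof.
pose entry p := [set t : 'I_N | (p \notin (rho t).2) && (p \in (rho (t + L)).2)].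
apply: (@leq_trans #|\bigcup_p entry p|).
  apply/subset_leq_card/subsetP => t; rewrite inE => /unsettled_entry[p hp].
  by apply/bigcupP; exists p; rewrite ?inE.
apply: leq_trans (card_bigcup_le entry) _; rewrite -sum_nat_const.
by apply: leq_sum => p _; apply: card_entry_window.
Qed.

Lemma settled_loop c : #|Pl G| * L + #|Vt G| * (#|Pl G|).+1 < c ->
  exists a b, [/\ a < b, b <= c, rho a = rho b & settled lam rho b].
Proof.
move=> big; pose S := [set t : 'I_c.+1 | settled lam rho t].
have : #|Vt G| * (#|Pl G|).+1 < #|S|.
  have := cardsC S; rewrite card_ord.
  have -> : ~: S = [set t : 'I_c.+1 | ~~ settled lam rho t] by apply/setP => t; rewrite !inE.
  by have := card_unsettled c.+1; lia.
case/(play_repeat pl) => x [y [_ yS xy exy]]; exists x, y; split=> //.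
  by rewrite -ltnS.
by move: yS; rewrite inE.
Qed.

End BoundedLabels.

Lemma sup_cost_le lam j (w : xvert G) L s :
  (forall x : xvert G, w.2 \subset x.2 -> forall b, lam x = Some b -> b <= L) ->
  sup_cost lam j w = Some s -> s <= #|Pl G| * L + #|Vt G| * (#|Pl G|).+1.
Proof.
move=> label_le hs; rewrite leqNgt; apply/negP => big.
have spec := esup_spec (fun x => exists rho, Lambda lam w rho /\ x = cost j rho).
rewrite -/(sup_cost lam j w) hs in spec.
have [s' es] : exists s', s = s'.+1 by case: s big {hs spec} => // s' _; exists s'.
subst s; have [rho [[pl r0 hcons] cs]] := esup_attained spec.
have label_le' n b : lam (rho n) = Some b -> b <= L.
  by apply: label_le; rewrite -r0; apply: play_subset.
have [a [b [ab bc eab sett]]] := settled_loop pl hcons label_le' big.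
have pumped : Lambda lam w (pump rho a b).
  split; [exact: pump_play | by rewrite pump_before ?(leq_ltn_trans _ ab) | exact: pump_consistent].
have := spec.1 _ (ex_intro _ _ (conj pumped erefl)).
by rewrite (pump_cost _ (esym cs) bc) /=; lia.
Qed.

End Plays.

(* A fresh label is 1 + a supremum bounded by [sup_cost_le], with |Pi| <= |V|. *)
Definition label_cap n t := iter t (fun x => n * x + n * n.+1 + 1) 0.

Lemma label_cap_mono n : 0 < n -> {homo label_cap n : t t' / t <= t'}.
Proof.
move=> n0 t t' /subnKC <-; elim: (t' - t) => [|d IH]; first by rewrite addn0.
rewrite addnS /label_cap iterS -/(label_cap n (t + d)); apply: leq_trans IH _.
have := leq_pmull (label_cap n (t + d)) n0; lia.
Qed.

Lemma label_cap_cube n t : 1 < n -> label_cap n t + n ^ 3 <= n ^ (t + 3).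
Proof.
move=> n1; elim: t => [|t IH] //.
rewrite /label_cap iterS -/(label_cap n t) addSn [n ^ (t + 3).+1]expnS.
have : n ^ 3 + n * n.+1 + 1 <= n * n ^ 3 by rewrite !expnS expn0; nia.
have := leq_mul (leqnn n) IH; rewrite mulnDr; lia.
Qed.

Section Iteration.
Variables (G : game) (J : seq {set Pl G}).

Definition nk k := (lam_seq J k).2.

Lemma lam_kS k : lam_k J k.+1 = update J (lam_k J k) (nk k).
Proof. by rewrite /lam_k /nk /lam_seq iterS; case: (iter k _ _). Qed.

Lemma nkS k : nk k.+1 <= nk k.
Proof.
rewrite /nk /lam_seq iterS; case: (iter k _ _) => lam n /=.
by case: ifP => _ //; apply: leq_pred.
Qed.

Lemma in_geq_le n n' u : n' <= n -> in_geq J n u -> in_geq J n' u.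
Proof. by rewrite /in_geq => le /andP[-> h]; apply: leq_trans h; rewrite -!subn1 leq_sub2r. Qed.

Lemma lam_k_outside k u : ~~ in_geq J (nk k) u -> lam_k J k u = lambda0 u.
Proof.
elim: k => [//|k IH] out.
have out' : ~~ in_geq J (nk k) u by apply: contra out; apply/in_geq_le/nkS.
by rewrite lam_kS /update (negbTE out') IH.
Qed.

Lemma lam_k_decr k u : ele (lam_k J k.+1 u) (lam_k J k u).
Proof.
elim: k u => [|k IH] u.
  rewrite lam_kS /update; case: ifP => _; last exact: ele_refl.
  by rewrite /lam_k /= /lambda0; case: ifP => //= _; case: esucc.
rewrite {1}lam_kS /update; case: ifP => _; last exact: ele_refl.
case: ifP => own; first by case: (lam_k _ _ _).
rewrite [in X in ele _ X]lam_kS /update; case: ifP => inside; rewrite ?own.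
  by apply/esucc_mono/bigmin_mono => w; apply: sup_cost_mono.
by rewrite lam_k_outside ?inside // /lambda0 own; case: esucc.
Qed.

Lemma lam_k_fresh k u a : lam_k J k u = None -> lam_k J k.+1 u = Some a ->
  a = 0 \/ exists w s, [/\ xedge u w, sup_cost (lam_k J k) (xowner u) w = Some s & a = s.+1].
Proof.
rewrite lam_kS /update => old; case: ifP => _; last by rewrite old.
case: ifP => _; first by case=> <-; left.
case E: (\big[emin/None]_(u' | xedge u u') _) => [s|] //= [<-]; right.
by have [w uw ws] := bigmin_Some E; exists w, s.
Qed.

Definition finite_labels k (I : {set Pl G}) :=
  #|[set v : Vt G | lam_k J k (v, I) != None]|.

Definition potential k (I : {set Pl G}) :=
  #|Vt G| * (#|Pl G| - #|I|) + finite_labels k I.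

Lemma finite_labels_mono k I : finite_labels k I <= finite_labels k.+1 I.
Proof.
apply/subset_leq_card/subsetP => v; rewrite !inE.
by have := lam_k_decr k (v, I); case: (lam_k J k.+1 _); case: (lam_k J k _).
Qed.

Lemma finite_labels_fresh k u : lam_k J k u = None -> lam_k J k.+1 u != None ->
  finite_labels k u.2 < finite_labels k.+1 u.2.
Proof.
move=> old new; apply: proper_card; rewrite properE; apply/andP; split.
  apply/subsetP => v; rewrite !inE; have := lam_k_decr k (v, u.2).
  by case: (lam_k J k.+1 _); case: (lam_k J k _).
by apply/subsetPn; exists u.1; rewrite !inE -surjective_pairing ?old ?new.
Qed.

Lemma potential_subset k (I I' : {set Pl G}) : I \subset I' -> potential k I' <= potential k I.
Proof.
move=> sub; case: (eqVneq I I') => [->//|ne].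
have lt : #|I| < #|I'| by apply: proper_card; rewrite properEneq ne.
have : #|I'| <= #|Pl G| := max_card _.
have : finite_labels k I' <= #|Vt G| := max_card _.
rewrite /potential; nia.
Qed.

Lemma label_le_cap k u a : #|Pl G| <= #|Vt G| -> 0 < #|Vt G| ->
  lam_k J k u = Some a -> a <= label_cap #|Vt G| (potential k u.2).
Proof.
move=> hP hV; elim: k u a => [|k IH] u a.
  by rewrite /lam_k /= /lambda0; case: ifP => // _ [<-].
case old: (lam_k J k u) => [a0|] new.
  have := lam_k_decr k u; rewrite new old /= => le.
  apply: leq_trans le (leq_trans (IH _ _ old) (label_cap_mono hV _)).
  by rewrite leq_add2l finite_labels_mono.
have grow : finite_labels k u.2 < finite_labels k.+1 u.2.
  by apply: finite_labels_fresh; rewrite ?new.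
case: (lam_k_fresh old new) => [->//|[w [s [uw ws ->]]]].
have sub : u.2 \subset w.2 by case/andP: uw => _ /eqP ->; apply: subsetUl.
set L := label_cap #|Vt G| (potential k u.2).
have label_le (x : xvert G) : w.2 \subset x.2 -> forall b, lam_k J k x = Some b -> b <= L.
  move=> wx b xb; apply: leq_trans (IH _ _ xb) (label_cap_mono hV _).
  exact/potential_subset/(subset_trans sub wx).
have := sup_cost_le label_le ws => hs.
apply: (@leq_trans (label_cap #|Vt G| (potential k u.2).+1)); last first.
  by apply: label_cap_mono => //; rewrite /potential -addnS leq_add2l.
rewrite /label_cap iterS -/(label_cap _ _) -/L.
have : #|Pl G| * L <= #|Vt G| * L by rewrite leq_mul2r hP orbT.
have : #|Vt G| * (#|Pl G|).+1 <= #|Vt G| * (#|Vt G|).+1 by rewrite leq_mul2l ltnS hP orbT.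
lia.
Qed.

End Iteration.

Theorem corollary3p13 :
  exists C : nat,
  forall (G : game) (J : seq {set Pl G}),
    2 <= #|Vt G| ->
    #|Pl G| <= #|Vt G| ->
    (forall v : Vt G, exists v' : Vt G, edge G v v') ->
    valid_order J ->
    forall (v : xvert G) (l : nat),
      1 <= l <= (size J).-1 ->
      v.2 = Jn J l ->
      forall (k : nat) (i : Pl G) (c : nat),
        sup_cost (lam_k J k) i v = Some c ->
        c <= C * #|Vt G| ^ ((#|Vt G| + 3) * (#|Pl G| + 2)).
Proof.
exists 2 => G J hV hP _ _ v l _ _ k i c hc.
set n := #|Vt G| in hV hP *; set m := #|Pl G| in hP *.
have hV0 : 0 < n by apply: ltnW.
set L := label_cap n (n * m + n).
have label_le x b : lam_k J k x = Some b -> b <= L.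
  move=> xb; apply: leq_trans (label_le_cap hP hV0 xb) (label_cap_mono hV0 _).
  by apply: leq_add; [rewrite leq_mul2l leq_subr orbT | apply: max_card].
have := sup_cost_le (fun x _ => label_le x) hc; rewrite -/m -/n => c_le.
have := label_cap_cube (n * m + n) hV; rewrite -/L => L_le.
set P := n ^ (n * m + n + 3) in L_le.
have mL : m * L <= n * P by apply: leq_mul; lia.
have cube : n.+1 <= n ^ 3 by rewrite !expnS expn0; nia.
have nm : n * m.+1 <= n * P by rewrite leq_mul2l; lia.
have nP : n * P <= n ^ ((n + 3) * (m + 2)).
  by rewrite -expnS; apply: leq_pexp2l => //; nia.
lia.
Qed.
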